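(* Let $T$ be an anonymous, non-counterfactual, reasonable comparison test. If $T\not\sim\mathcal{D}$, then $T$ is not error-free.
   Context: Let $\Omega=\{0,1\}$ and let $\Omega^\infty$ be the set of infinite sequences $\omega=(\omega_1,\omega_2,\dots)$; $\omega^t=(\omega_1,\dots,\omega_t)$ denotes the prefix and also the cylinder set $\{\hat\omega:\hat\omega^t=\omega^t\}$; $\Omega^\infty$ carries the $\sigma$-algebra generated by cylinders. $\Delta(\Omega)$ is the set of probability distributions on $\Omega$. A forecasting strategy is a function $f:\bigcup_{t\ge 0}(\Omega\times\Delta(\Omega)\times\Delta(\Omega))^t\to\Delta(\Omega)$; $F$ is the set of all forecasting strategies. For $f=(f_0,f_1)$ and $\omega$, the play path $h=h(\omega,f_0,f_1)\in(\Omega\times\Delta(\Omega)\times\Delta(\Omega))^\infty$ is defined by $h^0=\emptyset$, $h^t=(h^{t-1},(\omega_t,f_0(h^{t-1}),f_1(h^{t-1})))$. The induced measures satisfy $P_i^f(\omega^t)=\prod_{n=1}^t f_i(h^{n-1})[\omega_n]$, $i\in\{0,1\}$. A comparison test is a function $T:\Omega^\infty\times F\times F\to\{0,\tfrac12,1\}$, measurable in $\omega$ for each fixed pair; write $\{T(\cdot,f)=k\}=\{\omega:T(\omega,f_0,f_1)=k\}$. $T$ is anonymous if $T(\omega,f_0,f_1)=1-T(\omega,f_1,f_0)$ always. $T$ is non-counterfactual if there is $\hat T:(\Omega\times\Delta(\Omega)\times\Delta(\Omega))^\infty\to\{0,\tfrac12,1\}$ with $T(\omega,f_0,f_1)=\hat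 T(h(\omega,f_0,f_1))$. $T$ is error-free if for all $f$ and $i\in\{0,1\}$, $P_{1-i}^f(\{T(\cdot,f)=i\})=0$. $T$ is reasonable if for all $f$, $i\in\{0,1\}$ and measurable $A$: $P_i^f(A)>0$ and $P_{1-i}^f(A)=0$ imply $P_i^f(A\cap\{T(\cdot,f)=i\})>0$. $T\sim\hat T$ means: for every pair $f$ and every $i\in\{0,1\}$, $P_i^f(\{\omega:T(\omega,f_0,f_1)\ne\hat T(\omega,f_0,f_1)\})=0$. Likelihood ratios along $h=h(\omega,f_0,f_1)$: $D^t_{f_0}f_1(\omega)=\prod_{n=1}^t \frac{f_1(h^{n-1})[\omega_n]}{f_0(h^{n-1})[\omega_n]}$ and $D^t_{f_1}f_0(\omega)=\prod_{n=1}^t \frac{f_0(h^{n-1})[\omega_n]}{f_1(h^{n-1})[\omega_n]}$. For $(j,k)\in\{(0,1),(1,0)\}$, $\overline{D}_{f_j}f_k=\limsup_t D^t_{f_j}f_k$ and $\underline{D}_{f_j}f_k=\liminf_t D^t_{f_j}f_k$ if $f_j(h^{n-1})[\omega_n]>0$ for all $n$, and both $=+\infty$ otherwise; if they coincide and are finite the common value is the derivative $D_{f_j}f_k(\omega)$. The derivative test: $\mathcal{D}(\omega,f_0,f_1)=1$ if $D_{f_1}f_0(\omega)$ exists and equals $0$; $=0$ if $D_{f_0}f_1(\omega)$ exists and equals $0$; $=\tfrac12$ otherwise. *)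

From Stdlib Require Import Reals List Classical ClassicalEpsilon.
Open Scope R_scope.

(* Omega = {0,1} is bool (false = 0, true = 1).
   An infinite sequence omega = (omega_1, omega_2, ...) is  w : nat -> bool,
   with omega_{n+1} = w n. *)
Definition Seq := nat -> bool.

(* Delta(Omega): probability distributions on {0,1}, given by the
   probability p of outcome 1. *)
Definition Dist := { p : R | 0 <= p <= 1 }.
Definition prob (d : Dist) (b : bool) : R :=
  if b then proj1_sig d else 1 - proj1_sig d.

Definition Entry := (bool * Dist * Dist)%type.
Definition Hist := list Entry.
Definition Strategy := Hist -> Dist.

Fixpoint hist (f0 f1 : Strategy) (w : Seq) (t : nat) : Hist :=
  match t with
  | O => nil
  | S n => hist f0 f1 w n ++ ((w n, f0 (hist f0 f1 w n), f1 (hist f0 f1 w n)) :: nil)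
  end.

Definition path (f0 f1 : Strategy) (w : Seq) : nat -> Entry :=
  fun n => (w n, f0 (hist f0 f1 w n), f1 (hist f0 f1 w n)).

Definition fsel (i : bool) (f0 f1 : Strategy) : Strategy := if i then f1 else f0.

Fixpoint cyl_mass (i : bool) (f0 f1 : Strategy) (w : Seq) (t : nat) : R :=
  match t with
  | O => 1
  | S n => cyl_mass i f0 f1 w n * prob (fsel i f0 f1 (hist f0 f1 w n)) (w n)
  end.

Definition cyl (w : Seq) (t : nat) : Seq -> Prop :=
  fun v => forall n, (n < t)%nat -> v n = w n.

Inductive measurable : (Seq -> Prop) -> Prop :=
  | meas_cyl : forall w t, measurable (cyl w t)
  | meas_compl : forall A, measurable A -> measurable (fun v => ~ A v)
  | meas_union : forall (A : nat -> Seq -> Prop),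
      (forall k, measurable (A k)) -> measurable (fun v => exists k, A k v)
  | meas_ext : forall A B, (forall v, A v <-> B v) -> measurable A -> measurable B.

Fixpoint psum (a : nat -> R) (N : nat) : R :=
  match N with O => 0 | S n => psum a n + a n end.

(* P_i^f(A) = 0, via the outer measure generated by cylinders
   (Caratheodory extension): A can be covered by countably many
   cylinders of arbitrarily small total P_i^f-mass. *)
Definition null (i : bool) (f0 f1 : Strategy) (A : Seq -> Prop) : Prop :=
  forall eps, 0 < eps ->
    exists (ws : nat -> Seq) (ts : nat -> nat),
      (forall v, A v -> exists k, cyl (ws k) (ts k) v) /\
      (forall N, psum (fun k => cyl_mass i f0 f1 (ws k) (ts k)) N <= eps).

Inductive Out := O0 | Ohalf | O1.
Definition flip (o : Out) : Out :=
  match o with O0 => O1 | Ohalf => Ohalf | O1 => O0 end.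
Definition outb (i : bool) : Out := if i then O1 else O0.

Definition Test := Seq -> Strategy -> Strategy -> Out.

Definition test_measurable (T : Test) : Prop :=
  forall f0 f1 k, measurable (fun w => T w f0 f1 = k).

Definition anonymous (T : Test) : Prop :=
  forall w f0 f1, T w f0 f1 = flip (T w f1 f0).

Definition non_counterfactual (T : Test) : Prop :=
  exists That : (nat -> Entry) -> Out,
    forall w f0 f1, T w f0 f1 = That (path f0 f1 w).

Definition error_free (T : Test) : Prop :=
  forall f0 f1 (i : bool), null (negb i) f0 f1 (fun w => T w f0 f1 = outb i).

(* P_i(A) > 0 for measurable A is rendered as ~ null i A *)
Definition reasonable (T : Test) : Prop :=
  forall f0 f1 (i : bool) (A : Seq -> Prop),
    measurable A -> ~ null i f0 f1 A -> null (negb i) f0 f1 A ->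
    ~ null i f0 f1 (fun w => A w /\ T w f0 f1 = outb i).

Definition test_equiv (T T' : Test) : Prop :=
  forall f0 f1 (i : bool), null i f0 f1 (fun w => T w f0 f1 <> T' w f0 f1).

Fixpoint ratio (fj fk : Strategy) (h : nat -> Hist) (w : Seq) (t : nat) : R :=
  match t with
  | O => 1
  | S n => ratio fj fk h w n * (prob (fk (h n)) (w n) / prob (fj (h n)) (w n))
  end.

(* "D_{fj} fk (omega) exists and equals 0": fj gives positive probability
   to every realized outcome and D^t_{fj} fk -> 0 *)
Definition deriv_zero (f0 f1 : Strategy) (j : bool) (w : Seq) : Prop :=
  let fj := fsel j f0 f1 in
  let fk := fsel (negb j) f0 f1 in
  (forall n, 0 < prob (fj (hist f0 f1 w n)) (w n)) /\
  Un_cv (ratio fj fk (hist f0 f1 w) w) 0.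

Definition Dtest : Test := fun w f0 f1 =>
  if excluded_middle_informative (deriv_zero f0 f1 true w) then O1
  else if excluded_middle_informative (deriv_zero f0 f1 false w) then O0
  else Ohalf.

(** A reasonable error-free test already agrees with the derivative test almost
    surely under both forecasters.  Where [D] declares forecaster [j] the winner,
    the likelihood ratio [P_{1-j}(w^t) / P_j(w^t)] becomes arbitrarily small, and a stopping-time cover
    shows that this event is [P_{1-j}]-null; reasonableness then forces [T] to
    declare [j] there [P_j]-almost surely.  Where [D] does not declare [j], the
    ratio exceeds a fixed [c > 0] infinitely often, so every [P_{1-j}]-null set, in
    particular the set where an error-free [T] declares [j], is [P_j]-null there. *)

From Stdlib Require Import Reals List Classical ClassicalEpsilon Lia Lra.
Open Scope R_scope.

(** * Cylinder masses *)

Lemma prob_ge0 d b : 0 <= prob d b.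
Proof. destruct d as [p Hp]; destruct b; simpl; lra. Qed.

Lemma prob_le1 d b : prob d b <= 1.
Proof. destruct d as [p Hp]; destruct b; simpl; lra. Qed.

Lemma prob_false_true d : prob d false + prob d true = 1.
Proof. destruct d as [p Hp]; simpl; lra. Qed.

Lemma cyl_weaken w v s t : (s <= t)%nat -> cyl w t v -> cyl w s v.
Proof. intros Hst H n Hn; apply H; lia. Qed.

Lemma cyl_sym w v t : cyl w t v -> cyl v t w.
Proof. intros H n Hn; symmetry; auto. Qed.

Lemma hist_ext f0 f1 v w t : cyl w t v -> hist f0 f1 v t = hist f0 f1 w t.
Proof.
  induction t as [|t IH]; intros H; simpl; auto.
  rewrite IH by (apply (cyl_weaken _ _ t (S t)); auto).
  rewrite (H t) by lia. reflexivity.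
Qed.

Lemma cyl_mass_ext i f0 f1 v w t :
  cyl w t v -> cyl_mass i f0 f1 v t = cyl_mass i f0 f1 w t.
Proof.
  induction t as [|t IH]; intros H; simpl; auto.
  assert (Ht : cyl w t v) by (apply (cyl_weaken _ _ t (S t)); auto).
  rewrite IH, (hist_ext f0 f1 v w t), (H t) by (auto; lia). reflexivity.
Qed.

Lemma cyl_mass_ge0 i f0 f1 w t : 0 <= cyl_mass i f0 f1 w t.
Proof. induction t; simpl; [lra|]. apply Rmult_le_pos; auto. apply prob_ge0. Qed.

Lemma cyl_mass_antitone i f0 f1 w s t :
  (s <= t)%nat -> cyl_mass i f0 f1 w t <= cyl_mass i f0 f1 w s.
Proof.
  induction 1 as [|t _ IH]; [lra|]. simpl.
  pose proof (cyl_mass_ge0 i f0 f1 w t).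
  pose proof (prob_le1 (fsel i f0 f1 (hist f0 f1 w t)) (w t)).
  pose proof (prob_ge0 (fsel i f0 f1 (hist f0 f1 w t)) (w t)). nra.
Qed.

Lemma cyl_mass_eq0_after i f0 f1 w n0 :
  prob (fsel i f0 f1 (hist f0 f1 w n0)) (w n0) = 0 ->
  forall t, (S n0 <= t)%nat -> cyl_mass i f0 f1 w t = 0.
Proof.
  intros H t Ht. pose proof (cyl_mass_antitone i f0 f1 w (S n0) t Ht) as Hle.
  pose proof (cyl_mass_ge0 i f0 f1 w t). simpl in Hle. rewrite H in Hle. lra.
Qed.

Definition set_at (w : Seq) (t : nat) (b : bool) : Seq :=
  fun n => if Nat.eqb n t then b else w n.

Lemma cyl_set_at w t b : cyl w t (set_at w t b).
Proof. intros n Hn. unfold set_at. destruct (Nat.eqb_spec n t); [lia|auto]. Qed.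

Lemma cyl_mass_split i f0 f1 w t :
  cyl_mass i f0 f1 w t =
  cyl_mass i f0 f1 (set_at w t false) (S t) + cyl_mass i f0 f1 (set_at w t true) (S t).
Proof.
  simpl. rewrite !(cyl_mass_ext i f0 f1 (set_at w t _) w t) by apply cyl_set_at.
  rewrite !(hist_ext f0 f1 (set_at w t _) w t) by apply cyl_set_at.
  unfold set_at; rewrite !Nat.eqb_refl, <- Rmult_plus_distr_l, prob_false_true. ring.
Qed.

Lemma exists_cyl_mass_le_pow i f0 f1 t : exists w, cyl_mass i f0 f1 w t <= (1/2)^t.
Proof.
  induction t as [|t [w Hw]].
  - exists (fun _ => false). simpl. lra.
  - pose proof (cyl_mass_split i f0 f1 w t). simpl ((1/2)^(S t)).
    destruct (Rle_dec (cyl_mass i f0 f1 (set_at w t false) (S t))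
                      (cyl_mass i f0 f1 (set_at w t true) (S t))).
    + exists (set_at w t false). lra.
    + exists (set_at w t true). lra.
Qed.

Lemma pow_half_lt eps : 0 < eps -> exists n, (1/2)^n < eps.
Proof.
  intros Heps. destruct (pow_lt_1_zero (1/2)) with (y := eps) as [N HN]; auto.
  { rewrite Rabs_right; lra. }
  exists N. specialize (HN N (le_n _)). rewrite Rabs_right in HN; auto.
  apply Rle_ge, pow_le; lra.
Qed.

(** * Finite sums *)

Definition sumL {X} (g : X -> R) (l : list X) : R := fold_right (fun x acc => g x + acc) 0 l.

Lemma sumL_app {X} (g : X -> R) l1 l2 : sumL g (l1 ++ l2) = sumL g l1 + sumL g l2.
Proof. induction l1; simpl; [lra|]. rewrite IHl1; lra. Qed.

Lemma sumL_ge0 {X} (g : X -> R) l : (forall x, 0 <= g x) -> 0 <= sumL g l.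
Proof. intros H; induction l; simpl; [lra|]. specialize (H a); lra. Qed.

Lemma sumL_le {X} (g h : X -> R) l : (forall x, g x <= h x) -> sumL g l <= sumL h l.
Proof. intros H; induction l; simpl; [lra|]. specialize (H a); lra. Qed.

Lemma sumL_ext {X} (g h : X -> R) l : (forall x, g x = h x) -> sumL g l = sumL h l.
Proof. intros H; induction l; simpl; [lra|]. rewrite H, IHl; lra. Qed.

Lemma sumL_plus {X} (g h : X -> R) l : sumL (fun x => g x + h x) l = sumL g l + sumL h l.
Proof. induction l; simpl; [lra|]. rewrite IHl; lra. Qed.

Lemma sumL_scal {X} (g : X -> R) c l : sumL (fun x => c * g x) l = c * sumL g l.
Proof. induction l; simpl; [lra|]. rewrite IHl; lra. Qed.

Lemma sumL_map {X Y} (g : Y -> R) (f : X -> Y) l : sumL g (map f l) = sumL (fun x => g (f x)) l.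
Proof. induction l; simpl; [lra|]. rewrite IHl; lra. Qed.

Lemma sumL_filter {X} (g : X -> R) (p : X -> bool) l :
  sumL g (filter p l) = sumL (fun x => if p x then g x else 0) l.
Proof. induction l; simpl; [lra|]. destruct (p a); simpl; rewrite IHl; lra. Qed.

Lemma sumL_flat_map {X Y} (g : Y -> R) (f : X -> list Y) l :
  sumL g (flat_map f l) = sumL (fun x => sumL g (f x)) l.
Proof. induction l; simpl; [lra|]. rewrite sumL_app, IHl; lra. Qed.

Lemma sumL_seq (a : nat -> R) n : sumL a (seq 0 n) = psum a n.
Proof. induction n; [reflexivity|]. rewrite seq_S, sumL_app, IHn. simpl. lra. Qed.

Lemma psum_S a N : psum a (S N) = psum a N + a N.
Proof. reflexivity. Qed.

Lemma psum_ext a b N : (forall n, (n < N)%nat -> a n = b n) -> psum a N = psum b N.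
Proof. induction N; intros H; simpl; auto. rewrite IHN, H by (auto; lia). reflexivity. Qed.

Lemma psum_le a b N : (forall n, (n < N)%nat -> a n <= b n) -> psum a N <= psum b N.
Proof.
  induction N; intros H; simpl; [lra|].
  pose proof (H N (Nat.lt_succ_diag_r _)).
  pose proof (IHN (fun n Hn => H n (Nat.lt_lt_succ_r _ _ Hn))). lra.
Qed.

Lemma psum_zero N : psum (fun _ => 0) N = 0.
Proof. induction N; simpl; lra. Qed.

Lemma psum_mono a M N : (forall n, 0 <= a n) -> (M <= N)%nat -> psum a M <= psum a N.
Proof. intros H; induction 1; [lra|]. simpl. specialize (H m); lra. Qed.

Lemma psum_plus a b N : psum (fun n => a n + b n) N = psum a N + psum b N.
Proof. induction N; simpl; [lra|]. rewrite IHN; lra. Qed.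

Lemma psum_scal a c N : psum (fun n => c * a n) N = c * psum a N.
Proof. induction N; simpl; [lra|]. rewrite IHN; lra. Qed.

Lemma psum_shift a N : psum a (S N) = a O + psum (fun n => a (S n)) N.
Proof. induction N; simpl in *; [lra|]. rewrite IHN; lra. Qed.

Lemma psum_pow_half N : psum (fun n => (1/2)^(S n)) N <= 1.
Proof.
  assert (H : psum (fun n => (1/2)^(S n)) N = 1 - (1/2)^N).
  { induction N; simpl in *; [lra|]. rewrite IHN. lra. }
  rewrite H. pose proof (pow_le (1/2) N). lra.
Qed.

Lemma psum_antidiagonal_le (a : nat -> nat -> R) N : (forall m e, 0 <= a m e) ->
  psum (fun k => psum (fun m => a m (k - m)%nat) (S k)) N
  <= psum (fun m => psum (a m) N) N.
Proof.
  intros Ha.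
  assert (E : psum (fun k => psum (fun m => a m (k - m)%nat) (S k)) N
              = psum (fun m => psum (a m) (N - m)) N).
  { induction N; [reflexivity|].
    rewrite psum_S, IHN, (psum_S (fun m => psum (a m) (S N - m))).
    replace (S N - N)%nat with 1%nat by lia.
    rewrite psum_S, Nat.sub_diag.
    rewrite (psum_ext (fun m => psum (a m) (S N - m))
                      (fun m => psum (a m) (N - m) + a m (N - m)%nat)).
    2:{ intros n Hn. replace (S N - n)%nat with (S (N - n)) by lia. reflexivity. }
    rewrite psum_plus. simpl (psum (a N) 1). lra. }
  rewrite E. apply psum_le. intros m Hm. apply psum_mono; auto. lia.
Qed.

Lemma psum_nth_le {X} (g : option X -> R) l N : (forall x, 0 <= g x) -> g None = 0 ->
  psum (fun n => g (nth n l None)) N <= sumL g l.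
Proof.
  intros Hg HNone. revert N; induction l as [|x l IH]; intros N.
  - rewrite (psum_ext _ (fun _ => 0)), psum_zero; [simpl; lra|]. intros [|n] _; auto.
  - destruct N.
    + simpl. pose proof (sumL_ge0 g l Hg). specialize (Hg x). lra.
    + rewrite psum_shift. simpl. specialize (IH N). lra.
Qed.

(** * Null sets *)

(** A cylinder [w^t] is represented by the pair [(w, t)]. *)
Definition lmass i f0 f1 (l : list (Seq * nat)) : R :=
  sumL (fun p => cyl_mass i f0 f1 (fst p) (snd p)) l.

Definition omass i f0 f1 (o : option (Seq * nat)) : R :=
  match o with Some p => cyl_mass i f0 f1 (fst p) (snd p) | None => 0 end.

Lemma lmass_ge0 i f0 f1 l : 0 <= lmass i f0 f1 l.
Proof. apply sumL_ge0. intros; apply cyl_mass_ge0. Qed.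

Lemma omass_ge0 i f0 f1 o : 0 <= omass i f0 f1 o.
Proof. destruct o; simpl; [apply cyl_mass_ge0|lra]. Qed.

Definition covers (A : Seq -> Prop) (C : nat -> list (Seq * nat)) : Prop :=
  forall v, A v -> exists k p, In p (C k) /\ cyl (fst p) (snd p) v.

(** Every block starts with [None], so the [n]-th entry of [flatten_covers C k]
    no longer changes once [k > n]. *)
Definition flatten_covers (C : nat -> list (Seq * nat)) k : list (option (Seq * nat)) :=
  flat_map (fun k' => None :: map Some (C k')) (seq 0 k).

Lemma flatten_covers_S C k :
  flatten_covers C (S k) = flatten_covers C k ++ None :: map Some (C k).
Proof. unfold flatten_covers. rewrite seq_S, flat_map_app. simpl. rewrite app_nil_r. reflexivity. Qed.

Lemma flatten_covers_length C k : (k <= length (flatten_covers C k))%nat.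
Proof. induction k; [simpl; lia|]. rewrite flatten_covers_S, length_app. simpl. lia. Qed.

Lemma flatten_covers_prefix C k n : (k <= n)%nat ->
  exists r, flatten_covers C n = flatten_covers C k ++ r.
Proof.
  induction 1 as [|n _ [r Hr]]; [exists nil; rewrite app_nil_r; auto|].
  exists (r ++ None :: map Some (C n)). rewrite flatten_covers_S, Hr, app_assoc. reflexivity.
Qed.

Lemma flatten_covers_mass i f0 f1 C N :
  sumL (omass i f0 f1) (flatten_covers C N) = psum (fun k => lmass i f0 f1 (C k)) N.
Proof.
  induction N; [reflexivity|]. rewrite flatten_covers_S, sumL_app, IHN, psum_S.
  simpl. rewrite sumL_map, Rplus_0_l. reflexivity.
Qed.

(** The empty slots are filled with cylinders of mass at most [eps/2 * (1/2)^(S n)]. *)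
Lemma null_of_covers i f0 f1 (A : Seq -> Prop) :
  (forall eps, 0 < eps -> exists C, covers A C /\
     forall N, psum (fun k => lmass i f0 f1 (C k)) N <= eps) ->
  null i f0 f1 A.
Proof.
  intros H eps Heps.
  destruct (H (eps/2)) as [C [Hcov Hsum]]; [lra|].
  destruct (pow_half_lt (eps/2)) as [K HK]; [lra|].
  set (G := fun n => nth n (flatten_covers C (S n)) None).
  set (filler := fun n => proj1_sig (constructive_indefinite_description _
                          (exists_cyl_mass_le_pow i f0 f1 (n + 1 + K)))).
  assert (Hfiller : forall n, cyl_mass i f0 f1 (filler n) (n + 1 + K) <= (1/2)^(n + 1 + K)).
  { intros n. unfold filler. destruct (constructive_indefinite_description _ _); auto. }
  exists (fun n => match G n with Some p => fst p | None => filler n end).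
  exists (fun n => match G n with Some p => snd p | None => (n + 1 + K)%nat end).
  split.
  - intros v Hv. destruct (Hcov v Hv) as [k [p [Hp Hcyl]]].
    destruct (In_nth_error _ _ Hp) as [j Hj].
    set (n := (length (flatten_covers C k) + S j)%nat).
    assert (Hn : nth_error (flatten_covers C (S k)) n = Some (Some p)).
    { rewrite flatten_covers_S. unfold n. rewrite nth_error_app2 by lia.
      replace (length (flatten_covers C k) + S j - length (flatten_covers C k))%nat
        with (S j) by lia.
      simpl. rewrite nth_error_map, Hj. reflexivity. }
    assert (Hkn : (k <= n)%nat) by (pose proof (flatten_covers_length C k); unfold n; lia).
    destruct (flatten_covers_prefix C (S k) (S n)) as [r Hr]; [lia|].
    assert (HG : G n = Some p).
    { unfold G. rewrite Hr, app_nth1.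
      - apply nth_error_nth; auto.
      - apply nth_error_Some. rewrite Hn. discriminate. }
    exists n. rewrite HG. auto.
  - intros N.
    apply Rle_trans with (psum (fun n => omass i f0 f1 (G n) + eps/2 * (1/2)^(S n)) N).
    + apply psum_le. intros n _.
      assert (0 <= eps/2 * (1/2)^(S n)) by (apply Rmult_le_pos; [lra|apply pow_le; lra]).
      destruct (G n) as [p|]; unfold omass; [lra|].
      eapply Rle_trans; [apply Hfiller|]. rewrite pow_add.
      replace (n + 1)%nat with (S n) by lia. pose proof (pow_le (1/2) (S n)).
      rewrite Rplus_0_l, (Rmult_comm (eps/2)). apply Rmult_le_compat_l; lra.
    + rewrite psum_plus, psum_scal.
      assert (HG : psum (fun n => omass i f0 f1 (G n)) N <= eps/2).
      { apply Rle_trans with (psum (fun n => omass i f0 f1 (nth n (flatten_covers C N) None)) N).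
        - apply psum_le. intros n Hn. unfold G.
          destruct (flatten_covers_prefix C (S n) N) as [r ->]; [lia|].
          destruct (Nat.lt_ge_cases n (length (flatten_covers C (S n)))).
          + rewrite app_nth1 by auto. lra.
          + rewrite (nth_overflow (flatten_covers C (S n))) by auto. apply omass_ge0.
        - eapply Rle_trans; [apply psum_nth_le; [apply omass_ge0|reflexivity]|].
          rewrite flatten_covers_mass. auto. }
      pose proof (psum_pow_half N). nra.
Qed.

Definition antidiagonal (F : nat -> nat -> list (Seq * nat)) k : list (Seq * nat) :=
  flat_map (fun m => F m (k - m)%nat) (seq 0 (S k)).

Lemma null_of_double_covers i f0 f1 (A : Seq -> Prop) :
  (forall eps, 0 < eps -> exists F : nat -> nat -> list (Seq * nat),
     (forall v, A v -> exists m e p, In p (F m e) /\ cyl (fst p) (snd p) v) /\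
     (forall N, psum (fun m => psum (fun e => lmass i f0 f1 (F m e)) N) N <= eps)) ->
  null i f0 f1 A.
Proof.
  intros H. apply null_of_covers. intros eps Heps.
  destruct (H eps Heps) as [F [Hcov Hsum]]. exists (antidiagonal F). split.
  - intros v Hv. destruct (Hcov v Hv) as [m [e [p [Hp Hcyl]]]].
    exists (m + e)%nat, p. split; auto.
    apply in_flat_map. exists m. split; [apply in_seq; lia|].
    replace (m + e - m)%nat with e by lia. auto.
  - intros N. eapply Rle_trans; [|apply (Hsum N)].
    rewrite (psum_ext _ (fun k => psum (fun m => lmass i f0 f1 (F m (k - m)%nat)) (S k))).
    + apply (psum_antidiagonal_le (fun m e => lmass i f0 f1 (F m e))). intros; apply lmass_ge0.
    + intros k _. unfold antidiagonal, lmass. rewrite sumL_flat_map, sumL_seq. reflexivity.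
Qed.

Lemma null_sub i f0 f1 (A B : Seq -> Prop) :
  (forall v, A v -> B v) -> null i f0 f1 B -> null i f0 f1 A.
Proof.
  intros H HB eps He. destruct (HB eps He) as [ws [ts [H1 H2]]].
  exists ws, ts. split; auto.
Qed.

Lemma null_empty i f0 f1 (A : Seq -> Prop) : (forall v, ~ A v) -> null i f0 f1 A.
Proof.
  intros H. apply null_of_covers. intros eps He. exists (fun _ => nil). split.
  - intros v Hv. exfalso. eapply H; eauto.
  - intros N. unfold lmass. simpl. rewrite psum_zero. lra.
Qed.

Lemma null_countable_union i f0 f1 (A : nat -> Seq -> Prop) :
  (forall m, null i f0 f1 (A m)) -> null i f0 f1 (fun v => exists m, A m v).
Proof.
  intros H. apply null_of_double_covers. intros eps He.
  assert (Hm : forall m, exists c : (nat -> Seq) * (nat -> nat),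
    (forall v, A m v -> exists k, cyl (fst c k) (snd c k) v) /\
    (forall N, psum (fun k => cyl_mass i f0 f1 (fst c k) (snd c k)) N <= eps * (1/2)^(S m))).
  { intros m. destruct (H m (eps * (1/2)^(S m))) as [ws [ts Hc]].
    - apply Rmult_lt_0_compat; [lra|apply pow_lt; lra].
    - exists (ws, ts). exact Hc. }
  destruct (choice _ Hm) as [W HW].
  exists (fun m e => (fst (W m) e, snd (W m) e) :: nil). split.
  - intros v [m Hv]. destruct (proj1 (HW m) v Hv) as [k Hk].
    exists m, k, (fst (W m) k, snd (W m) k). simpl. auto.
  - intros N. unfold lmass. simpl.
    apply Rle_trans with (psum (fun m => eps * (1/2)^(S m)) N).
    + apply psum_le. intros m _. eapply Rle_trans; [|apply (proj2 (HW m) N)].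
      right. apply psum_ext. intros; lra.
    + rewrite psum_scal. pose proof (psum_pow_half N). nra.
Qed.

Lemma null_union i f0 f1 (A B : Seq -> Prop) :
  null i f0 f1 A -> null i f0 f1 B -> null i f0 f1 (fun v => A v \/ B v).
Proof.
  intros HA HB.
  apply (null_sub _ _ _ _ (fun v => exists m, (if Nat.eqb m 0 then A else B) v)).
  - intros v [H|H]; [exists 0%nat|exists 1%nat]; auto.
  - apply null_countable_union. intros m; destruct (Nat.eqb m 0); auto.
Qed.

(** * Stopping-time covers *)

Definition asbool (P : Prop) : bool := if excluded_middle_informative P then true else false.

Lemma asbool_true (P : Prop) : P -> asbool P = true.
Proof. unfold asbool; destruct (excluded_middle_informative P); tauto. Qed.

Lemma asbool_false (P : Prop) : ~ P -> asbool P = false.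
Proof. unfold asbool; destruct (excluded_middle_informative P); tauto. Qed.

Lemma asboolP (P : Prop) : asbool P = true -> P.
Proof. unfold asbool; destruct (excluded_middle_informative P); easy. Qed.

Lemma exists_least (P : nat -> Prop) :
  (exists n, P n) -> exists n, P n /\ forall m, (m < n)%nat -> ~ P m.
Proof.
  intros [n Hn]. induction n as [n IH] using (well_founded_induction Wf_nat.lt_wf).
  destruct (classic (exists m, (m < n)%nat /\ P m)) as [[m [Hm Pm]]|Hno].
  - apply (IH m Hm Pm).
  - exists n. split; auto. intros m Hm Pm. apply Hno; eauto.
Qed.

(** [extensions u t0 d] lists one representative of each cylinder of length
    [t0 + d] inside the cylinder [u^t0]. *)
Fixpoint extensions (u : Seq) (t0 d : nat) : list Seq :=
  match d with
  | O => u :: nil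
  | S d' => flat_map (fun x => set_at x (t0 + d') false :: set_at x (t0 + d') true :: nil)
                     (extensions u t0 d')
  end.

Lemma extensions_cover u t0 v d :
  cyl u t0 v -> exists x, In x (extensions u t0 d) /\ cyl x (t0 + d) v.
Proof.
  intros Hu. induction d as [|d [x [Hx Hcyl]]].
  - exists u. simpl. rewrite Nat.add_0_r. auto.
  - exists (set_at x (t0 + d) (v (t0 + d)%nat)). split.
    + apply in_flat_map. exists x. split; auto. destruct (v (t0 + d)%nat); simpl; auto.
    + intros n Hn. unfold set_at. destruct (Nat.eqb_spec n (t0 + d)); [subst; auto|].
      apply Hcyl; lia.
Qed.

Lemma sumL_extensions_S (g : Seq -> R) u t0 d :
  sumL g (extensions u t0 (S d)) =
  sumL (fun x => g (set_at x (t0 + d) false) + g (set_at x (t0 + d) true)) (extensions u t0 d).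
Proof. simpl. rewrite sumL_flat_map. apply sumL_ext. intros x. simpl. lra. Qed.

Definition prefix_determined (Q : Seq -> nat -> Prop) : Prop :=
  forall v w t, cyl w t v -> (Q v t <-> Q w t).

Definition avoids (Q : Seq -> nat -> Prop) t0 d x : Prop :=
  forall e, (e < d)%nat -> ~ Q x (t0 + e)%nat.

Definition first_hit (Q : Seq -> nat -> Prop) t0 d x : Prop :=
  avoids Q t0 d x /\ Q x (t0 + d)%nat.

Definition first_hits Q u t0 e : list (Seq * nat) :=
  map (fun x => (x, (t0 + e)%nat)) (filter (fun x => asbool (first_hit Q t0 e x)) (extensions u t0 e)).

Lemma first_hits_cover Q u t0 v : prefix_determined Q -> cyl u t0 v ->
  (exists t, (t0 <= t)%nat /\ Q v t) ->
  exists e p, In p (first_hits Q u t0 e) /\ cyl (fst p) (snd p) v.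
Proof.
  intros HQ Hu [t [Ht Qt]].
  destruct (exists_least (fun e => Q v (t0 + e)%nat)) as [e [Qe Hleast]].
  { exists (t - t0)%nat. replace (t0 + (t - t0))%nat with t by lia. auto. }
  destruct (extensions_cover u t0 v e Hu) as [x [Hx Hcyl]].
  exists e, (x, (t0 + e)%nat). split; auto.
  apply in_map_iff. exists x. split; auto. apply filter_In. split; auto.
  apply asbool_true. split.
  - intros e' He' Qe'. apply (Hleast e' He'). apply (HQ v x); auto.
    apply (cyl_weaken _ _ _ (t0 + e)); auto. lia.
  - apply (HQ x v); auto. apply cyl_sym; auto.
Qed.

Section FirstHits.

Variables (b : bool) (f0 f1 : Strategy) (Q : Seq -> nat -> Prop) (t0 : nat).
Hypothesis HQ : prefix_determined Q.

Let stopped_mass d x := if asbool (first_hit Q t0 d x) then cyl_mass b f0 f1 x (t0 + d) else 0.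
Let alive_mass d x := if asbool (avoids Q t0 d x) then cyl_mass b f0 f1 x (t0 + d) else 0.

Lemma alive_mass_step d x :
  alive_mass d x = stopped_mass d x +
    (alive_mass (S d) (set_at x (t0 + d) false) + alive_mass (S d) (set_at x (t0 + d) true)).
Proof.
  unfold alive_mass, stopped_mass.
  assert (Hchild : forall c, avoids Q t0 (S d) (set_at x (t0 + d) c) <-> avoids Q t0 (S d) x).
  { intros c. assert (Hcyl : cyl x (t0 + d) (set_at x (t0 + d) c)) by apply cyl_set_at.
    split; intros H e He Qe; apply (H e He).
    - apply (HQ _ x); auto. apply (cyl_weaken _ _ _ (t0 + d)); auto. lia.
    - apply (HQ _ x) in Qe; auto. apply (cyl_weaken _ _ _ (t0 + d)); auto. lia. }
  assert (HS : avoids Q t0 (S d) x <-> avoids Q t0 d x /\ ~ Q x (t0 + d)%nat).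
  { split.
    - intros H. split; [intros e He; apply H; lia|apply H; lia].
    - intros [H Hd] e He. destruct (Nat.eq_dec e d); [subst; auto|apply H; lia]. }
  replace (t0 + S d)%nat with (S (t0 + d)) by lia.
  destruct (classic (avoids Q t0 d x)) as [Ha|Ha].
  - rewrite (asbool_true _ Ha). destruct (classic (Q x (t0 + d)%nat)) as [Qd|Qd].
    + rewrite asbool_true by (split; auto).
      rewrite !asbool_false by (rewrite Hchild, HS; tauto). lra.
    + rewrite asbool_false by (intros [_ H]; auto).
      rewrite !asbool_true by (rewrite Hchild, HS; tauto).
      rewrite <- cyl_mass_split. lra.
  - rewrite (asbool_false _ Ha), asbool_false by (intros [H _]; auto).
    rewrite !asbool_false by (rewrite Hchild, HS; tauto). lra.
Qed.

Lemma first_hits_conservation u N :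
  psum (fun e => sumL (stopped_mass e) (extensions u t0 e)) N
  + sumL (alive_mass N) (extensions u t0 N) = cyl_mass b f0 f1 u t0.
Proof.
  induction N as [|d IH].
  - unfold alive_mass. simpl. rewrite asbool_true by (intros e He; lia).
    rewrite Nat.add_0_r. lra.
  - rewrite <- IH, psum_S, sumL_extensions_S, Rplus_assoc, <- sumL_plus.
    f_equal. apply sumL_ext. intros x. symmetry. apply alive_mass_step.
Qed.

Lemma first_hits_mass_le a u c : 0 <= c ->
  (forall w t, Q w t -> cyl_mass a f0 f1 w t <= c * cyl_mass b f0 f1 w t) ->
  forall N, psum (fun e => lmass a f0 f1 (first_hits Q u t0 e)) N <= c * cyl_mass b f0 f1 u t0.
Proof.
  intros Hc Hratio N. rewrite <- (first_hits_conservation u N).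
  assert (0 <= sumL (alive_mass N) (extensions u t0 N)).
  { apply sumL_ge0. intros x. unfold alive_mass. destruct (asbool _); [apply cyl_mass_ge0|lra]. }
  enough (psum (fun e => lmass a f0 f1 (first_hits Q u t0 e)) N
          <= c * psum (fun e => sumL (stopped_mass e) (extensions u t0 e)) N) by nra.
  rewrite <- psum_scal. apply psum_le. intros e _.
  unfold lmass, first_hits. rewrite sumL_map, sumL_filter, <- sumL_scal. apply sumL_le.
  intros x. unfold stopped_mass. simpl. destruct (asbool (first_hit Q t0 e x)) eqn:E; [|lra].
  apply Hratio, (asboolP _ E).
Qed.

End FirstHits.

(** * Measurability *)

Lemma measurable_empty : measurable (fun _ => False).
Proof.
  apply (meas_ext (fun v => ~ cyl (fun _ => false) 0 v)).
  - intros v; split; [intros H; apply H; intros n Hn; lia|tauto].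
  - apply meas_compl, meas_cyl.
Qed.

(** Finite prefixes are enumerated through the binary digits of a natural number. *)
Definition seq_of_nat (n : nat) : Seq := fun i => Nat.testbit n i.

Lemma seq_of_nat_onto t : forall w, exists n, cyl (seq_of_nat n) t w.
Proof.
  induction t as [|t IH]; intros w.
  - exists 0%nat. intros n Hn; lia.
  - destruct (IH (fun i => w (S i))) as [n Hn].
    exists (2 * n + (if w 0%nat then 1 else 0))%nat.
    intros [|i] Hi; unfold seq_of_nat; destruct (w 0%nat).
    + now rewrite Nat.testbit_odd_0.
    + now rewrite Nat.add_0_r, Nat.testbit_even_0.
    + rewrite Nat.testbit_odd_succ by lia. apply (Hn i); lia.
    + rewrite Nat.add_0_r, Nat.testbit_even_succ by lia. apply (Hn i); lia.
Qed.

Lemma measurable_prefix_determined (P : Seq -> Prop) t :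
  (forall v w, cyl w t v -> (P v <-> P w)) -> measurable P.
Proof.
  intros HP.
  apply (meas_ext (fun v => exists n,
           (if asbool (P (seq_of_nat n)) then cyl (seq_of_nat n) t else fun _ => False) v)).
  - intros v. split.
    + intros [n Hn]. destruct (asbool (P (seq_of_nat n))) eqn:E; [|contradiction].
      apply (HP v (seq_of_nat n)); auto. apply (asboolP _ E).
    + intros Hv. destruct (seq_of_nat_onto t v) as [n Hn]. exists n.
      rewrite asbool_true by (apply (HP v (seq_of_nat n)); auto). auto.
  - apply meas_union. intros n. destruct (asbool _); [apply meas_cyl|apply measurable_empty].
Qed.

Lemma measurable_and (A B : Seq -> Prop) :
  measurable A -> measurable B -> measurable (fun v => A v /\ B v).
Proof.
  intros HA HB.
  apply (meas_ext (fun v => ~ exists n, (if Nat.eqb n 0 then fun v => ~ A v else fun v => ~ B v) v)).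
  - intros v; split.
    + intros H. split; apply NNPP; intros Hn; apply H; [exists 0%nat|exists 1%nat]; auto.
    + intros [Ha Hb] [[|n] Hn]; auto.
  - apply meas_compl, meas_union. intros [|n]; apply meas_compl; auto.
Qed.

Lemma measurable_forall (A : nat -> Seq -> Prop) :
  (forall n, measurable (A n)) -> measurable (fun v => forall n, A n v).
Proof.
  intros H. apply (meas_ext (fun v => ~ exists n, ~ A n v)).
  - intros v; split; [intros H1 n; apply NNPP; intros H2; apply H1; eauto|intros H1 [n Hn]; auto].
  - apply meas_compl, meas_union. intros n; apply meas_compl; auto.
Qed.

(** * Likelihood ratios *)

Section Ratios.

Variables (f0 f1 : Strategy) (j : bool).

Let ratio_j (w : Seq) := ratio (fsel j f0 f1) (fsel (negb j) f0 f1) (hist f0 f1 w) w.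

Lemma ratio_ge0 w t : 0 <= ratio_j w t.
Proof.
  unfold ratio_j. induction t; simpl; [lra|]. apply Rmult_le_pos; auto.
  unfold Rdiv. apply Rmult_le_pos; [apply prob_ge0|].
  destruct (Req_dec (prob (fsel j f0 f1 (hist f0 f1 w t)) (w t)) 0) as [E|E].
  - rewrite E, Rinv_0. lra.
  - pose proof (prob_ge0 (fsel j f0 f1 (hist f0 f1 w t)) (w t)).
    left. apply Rinv_0_lt_compat. lra.
Qed.

Lemma ratio_mul_cyl_mass w :
  (forall n, 0 < prob (fsel j f0 f1 (hist f0 f1 w n)) (w n)) ->
  forall t, ratio_j w t * cyl_mass j f0 f1 w t = cyl_mass (negb j) f0 f1 w t.
Proof.
  intros Hpos t. unfold ratio_j. induction t as [|t IH]; simpl; [lra|].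
  rewrite <- IH. specialize (Hpos t). field. lra.
Qed.

Definition fast_decay (w : Seq) : Prop :=
  forall n, exists t, cyl_mass (negb j) f0 f1 w t <= (1/2)^n * cyl_mass j f0 f1 w t.

Definition often_dominated (c : R) (w : Seq) : Prop :=
  forall N, exists t, (N <= t)%nat /\ c * cyl_mass j f0 f1 w t <= cyl_mass (negb j) f0 f1 w t.

Lemma deriv_zero_fast_decay w : deriv_zero f0 f1 j w -> fast_decay w.
Proof.
  intros [Hpos Hcv] n. assert (Hn : 0 < (1/2)^n) by (apply pow_lt; lra).
  destruct (Hcv _ Hn) as [N HN]. specialize (HN N (le_n _)).
  exists N. rewrite <- (ratio_mul_cyl_mass w Hpos N).
  unfold R_dist in HN. rewrite Rminus_0_r in HN.
  pose proof (Rle_abs (ratio_j w N)). pose proof (cyl_mass_ge0 j f0 f1 w N).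
  unfold ratio_j in *. nra.
Qed.

Lemma not_deriv_zero_often_dominated w :
  ~ deriv_zero f0 f1 j w -> exists n, often_dominated ((1/2)^n) w.
Proof.
  intros Hnd.
  destruct (classic (forall n, 0 < prob (fsel j f0 f1 (hist f0 f1 w n)) (w n))) as [Hpos|Hpos].
  - assert (Hncv : ~ Un_cv (ratio_j w) 0) by (intros Hcv; apply Hnd; split; auto).
    apply not_all_ex_not in Hncv as [eps Heps].
    apply imply_to_and in Heps as [He Hno].
    destruct (pow_half_lt eps He) as [n Hn]. exists n. intros N.
    apply Classical_Pred_Type.not_ex_all_not with (n := N) in Hno.
    apply not_all_ex_not in Hno as [t Ht]. apply imply_to_and in Ht as [HtN Ht].
    exists t. split; [lia|].
    rewrite <- (ratio_mul_cyl_mass w Hpos t).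
    unfold R_dist in Ht. rewrite Rminus_0_r, Rabs_right in Ht by (apply Rle_ge, ratio_ge0).
    pose proof (cyl_mass_ge0 j f0 f1 w t). nra.
  - (* an outcome of [P_j]-probability zero was realized: [P_j(w^t)] vanishes from then on *)
    apply not_all_ex_not in Hpos as [n0 Hn0].
    assert (E : prob (fsel j f0 f1 (hist f0 f1 w n0)) (w n0) = 0).
    { pose proof (prob_ge0 (fsel j f0 f1 (hist f0 f1 w n0)) (w n0)). lra. }
    exists 0%nat. intros N. exists (N + S n0)%nat. split; [lia|].
    rewrite (cyl_mass_eq0_after j f0 f1 w n0 E) by lia.
    pose proof (cyl_mass_ge0 (negb j) f0 f1 w (N + S n0)). lra.
Qed.

Lemma dominated_prefix_determined c :
  prefix_determined (fun w t => c * cyl_mass j f0 f1 w t <= cyl_mass (negb j) f0 f1 w t).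
Proof. intros v w t Hcyl. rewrite !(cyl_mass_ext _ f0 f1 v w t Hcyl). tauto. Qed.

Lemma decayed_prefix_determined c :
  prefix_determined (fun w t => cyl_mass (negb j) f0 f1 w t <= c * cyl_mass j f0 f1 w t).
Proof. intros v w t Hcyl. rewrite !(cyl_mass_ext _ f0 f1 v w t Hcyl). tauto. Qed.

Lemma fast_decay_measurable : measurable fast_decay.
Proof.
  apply measurable_forall. intros n. apply meas_union. intros t.
  apply (measurable_prefix_determined _ t). intros v w Hcyl.
  apply (decayed_prefix_determined _ v w t Hcyl).
Qed.

(** Stop each path the first time the ratio drops below [(1/2)^n]: the stopped
    cylinders have [P_{1-j}]-mass at most [(1/2)^n] in total. *)
Lemma fast_decay_null : null (negb j) f0 f1 fast_decay.
Proof.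
  apply null_of_covers. intros eps Heps. destruct (pow_half_lt eps Heps) as [n Hn].
  set (Q := fun w t => cyl_mass (negb j) f0 f1 w t <= (1/2)^n * cyl_mass j f0 f1 w t).
  set (u := fun _ : nat => false).
  exists (first_hits Q u 0). split.
  - intros v Hv. apply (first_hits_cover Q u 0 v (decayed_prefix_determined _)).
    + intros k Hk; lia.
    + destruct (Hv n) as [t Ht]. exists t. split; [lia|auto].
  - intros N. eapply Rle_trans.
    + apply (first_hits_mass_le j f0 f1 Q 0 (decayed_prefix_determined _) (negb j) u ((1/2)^n));
        [apply pow_le; lra|auto].
    + change (cyl_mass j f0 f1 u 0) with 1. lra.
Qed.

(** Stopping inside each cylinder of a small [P_{1-j}]-cover when the ratio first
    exceeds [c] yields a [P_j]-cover of mass at most [1/c] times as large. *)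
Lemma often_dominated_null c (B : Seq -> Prop) : 0 < c -> null (negb j) f0 f1 B ->
  null j f0 f1 (fun w => B w /\ often_dominated c w).
Proof.
  intros Hc HB. apply null_of_double_covers. intros eps He.
  destruct (HB (eps * c)) as [ws [ts [Hcov Hsum]]]; [nra|].
  set (Q := fun w t => c * cyl_mass j f0 f1 w t <= cyl_mass (negb j) f0 f1 w t).
  exists (fun m e => first_hits Q (ws m) (ts m) e). split.
  - intros v [Hv Hdom]. destruct (Hcov v Hv) as [m Hm].
    destruct (first_hits_cover Q (ws m) (ts m) v (dominated_prefix_determined c) Hm)
      as [e [p Hp]].
    + destruct (Hdom (ts m)) as [t Ht]. exists t; auto.
    + exists m, e, p. auto.
  - intros N.
    apply Rle_trans with (psum (fun m => / c * cyl_mass (negb j) f0 f1 (ws m) (ts m)) N).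
    + apply psum_le. intros m _. apply first_hits_mass_le.
      * apply dominated_prefix_determined.
      * left; apply Rinv_0_lt_compat; auto.
      * intros w t Hq. unfold Q in Hq.
        apply (Rmult_le_reg_l c); auto. rewrite <- Rmult_assoc, Rinv_r by lra. lra.
    + rewrite psum_scal. specialize (Hsum N).
      apply Rle_trans with (/ c * (eps * c)).
      * apply Rmult_le_compat_l; auto. left; apply Rinv_0_lt_compat; auto.
      * right. field. lra.
Qed.

End Ratios.

Lemma null_of_both i j f0 f1 (A : Seq -> Prop) :
  null j f0 f1 A -> null (negb j) f0 f1 A -> null i f0 f1 A.
Proof. destruct i, j; auto. Qed.

Lemma Dtest_disagreement (T : Test) f0 f1 w : T w f0 f1 <> Dtest w f0 f1 ->
  exists j, (deriv_zero f0 f1 j w /\ T w f0 f1 <> outb j) \/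
            (~ deriv_zero f0 f1 j w /\ T w f0 f1 = outb j).
Proof.
  unfold Dtest. intros Hne.
  destruct (excluded_middle_informative (deriv_zero f0 f1 true w)) as [D1|D1];
    [exists true; auto|].
  destruct (excluded_middle_informative (deriv_zero f0 f1 false w)) as [D0|D0];
    [exists false; auto|].
  destruct (T w f0 f1); [exists false|contradiction|exists true]; auto.
Qed.

Section ReasonableErrorFree.

Variables (T : Test) (f0 f1 : Strategy).
Hypotheses (HT_meas : test_measurable T) (HT_reas : reasonable T) (HT_ef : error_free T).

Lemma reasonable_null j (A : Seq -> Prop) : measurable A -> null (negb j) f0 f1 A ->
  (forall w, A w -> T w f0 f1 <> outb j) -> null j f0 f1 A.
Proof.
  intros HA Hnull Hne. apply NNPP. intros Hpos.
  apply (HT_reas f0 f1 j A HA Hpos Hnull), null_empty.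
  intros w [Aw HTw]. exact (Hne w Aw HTw).
Qed.

Lemma wrongly_rejected_null i j :
  null i f0 f1 (fun w => deriv_zero f0 f1 j w /\ T w f0 f1 <> outb j).
Proof.
  apply (null_sub _ _ _ _ (fun w => fast_decay f0 f1 j w /\ T w f0 f1 <> outb j)).
  { intros w [Hd Hne]. split; auto. apply deriv_zero_fast_decay; auto. }
  assert (Hnull : null (negb j) f0 f1 (fun w => fast_decay f0 f1 j w /\ T w f0 f1 <> outb j)).
  { apply (null_sub _ _ _ _ (fast_decay f0 f1 j)); [tauto|apply fast_decay_null]. }
  apply (null_of_both _ j); auto.
  apply reasonable_null; auto; [|tauto].
  apply measurable_and; [apply fast_decay_measurable|apply meas_compl, HT_meas].
Qed.

Lemma wrongly_accepted_null i j :
  null i f0 f1 (fun w => ~ deriv_zero f0 f1 j w /\ T w f0 f1 = outb j).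
Proof.
  assert (Hacc : null (negb j) f0 f1 (fun w => T w f0 f1 = outb j)) by apply HT_ef.
  apply (null_of_both _ j).
  - apply (null_sub _ _ _ _ (fun w => exists n,
             T w f0 f1 = outb j /\ often_dominated f0 f1 j ((1/2)^n) w)).
    + intros w [Hnd HTw]. destruct (not_deriv_zero_often_dominated f0 f1 j w Hnd) as [n Hn].
      exists n. auto.
    + apply null_countable_union. intros n.
      apply often_dominated_null; auto. apply pow_lt; lra.
  - apply (null_sub _ _ _ _ (fun w => T w f0 f1 = outb j)); [tauto|auto].
Qed.

End ReasonableErrorFree.

Theorem reasonable_error_free_equiv_Dtest (T : Test) :
  test_measurable T -> reasonable T -> error_free T -> test_equiv T Dtest.
Proof.
  intros Hmeas Hreas Hef f0 f1 i.
  set (wrong j w := (deriv_zero f0 f1 j w /\ T w f0 f1 <> outb j) \/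
                    (~ deriv_zero f0 f1 j w /\ T w f0 f1 = outb j)).
  apply (null_sub _ _ _ _ (fun w => wrong true w \/ wrong false w)).
  - intros w Hne. destruct (Dtest_disagreement T f0 f1 w Hne) as [[|] Hj]; [left|right]; exact Hj.
  - assert (Hwrong : forall j, null i f0 f1 (wrong j)).
    { intros j. apply null_union;
        [apply wrongly_rejected_null|apply wrongly_accepted_null]; auto. }
    apply null_union; apply Hwrong.
Qed.

Theorem theorem2 (T : Test) :
  test_measurable T -> anonymous T -> non_counterfactual T -> reasonable T ->
  ~ test_equiv T Dtest -> ~ error_free T.
Proof.
  intros Hmeas _ _ Hreas Hneq Hef.
  exact (Hneq (reasonable_error_free_equiv_Dtest T Hmeas Hreas Hef)).
Qed.
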